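(* Let $a,b,c\in[0,1]$ with $1-a+b>0$, and consider the Markov chain on the three states $\{0,1,e\}$ with transition matrix (rows = current state $0,1,e$; columns = next state $0,1,e$) $$\Pi=\begin{pmatrix} a-b & 1-a & b\\ b-c & 1-b & c\\ a-b & 1-a & b\end{pmatrix},$$ assumed to have nonnegative entries. Then every stationary distribution $(p_0,p_1,p_e)$ of $\Pi$ satisfies $$p_e=\frac{c-ac+b^2}{1-a+b}.$$ In particular, with $a=\epsilon_{L-1}$, $b=\epsilon_L$, $c=\epsilon_{L+1}$, the packet error rate (stationary probability of the error state) of D-HARQ with parameters $L$ and $m=1$ equals $\dfrac{\epsilon_{L+1}-\epsilon_{L-1}\epsilon_{L+1}+\epsilon_L^2}{1-\epsilon_{L-1}+\epsilon_L}$.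
   Context: D-HARQ with $m=1$: states $0,1$ indicate how many extra transmissions (beyond $L$) the current packet may use, and $e$ is the error (packet dropped) state; $\epsilon_w$ denotes the decoding failure probability after $w$ received copies. The packet error rate of D-HARQ is defined as the stationary probability of the error state. *)

From mathcomp Require Import all_boot all_order all_algebra.
Set Implicit Arguments. Unset Strict Implicit. Unset Printing Implicit Defensive.
Import Order.TTheory GRing.Theory Num.Theory.
Local Open Scope ring_scope.

(* States are indexed by 'I_3: 0 -> state 0, 1 -> state 1, 2 -> error state e. *)

Definition dharq_Pi (R : pzRingType) (a b c : R) : 'M[R]_3 :=
  \matrix_(i < 3, j < 3)
    nth 0 (nth [::] [:: [:: a - b; 1 - a; b];
                        [:: b - c; 1 - b; c];
                        [:: a - b; 1 - a; b]] i) j.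

Definition stationary_distribution (R : numDomainType) (n : nat)
    (P : 'M[R]_n) (p : 'rV[R]_n) : Prop :=
  (forall j, 0 <= p 0 j) /\ \sum_j p 0 j = 1 /\ p *m P = p.

Definition err_state : 'I_3 := @Ordinal 3 2 isT.

From mathcomp Require Import all_boot all_order all_algebra.
From mathcomp Require Import ring.
Set Implicit Arguments.
Unset Strict Implicit.
Unset Printing Implicit Defensive.
Import Order.TTheory GRing.Theory Num.Theory.
Local Open Scope ring_scope.

(* Only two columns of p Pi = p are needed.  Since rows 0 and e of Pi agree,
   column 1 together with p0 + p1 + pe = 1 gives p1 (1 - a + b) = 1 - a, and
   column e gives pe = b + (c - b) p1; eliminating p1 yields the formula.  No
   sign or bound condition is used besides 1 - a + b <> 0: the identity holds
   for every invariant vector of total mass 1, over any commutative ring. *)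

Lemma sum_ord3 (V : nmodType) (f : 'I_3 -> V) :
  \sum_i f i = f 0 + f 1 + f err_state.
Proof.
rewrite !big_ord_recl big_ord0 addr0 addrA.
by congr (f _ + f _ + f _); apply: val_inj.
Qed.

Section DharqStationary.

Variables (R : comPzRingType) (a b c : R) (p : 'rV[R]_3).

Lemma mulmx_dharq_Pi_state1 :
  (p *m dharq_Pi a b c) 0 1 =
    p 0 0 * (1 - a) + p 0 1 * (1 - b) + p 0 err_state * (1 - a).
Proof. by rewrite mxE sum_ord3 !mxE. Qed.

Lemma mulmx_dharq_Pi_err :
  (p *m dharq_Pi a b c) 0 err_state =
    p 0 0 * b + p 0 1 * c + p 0 err_state * b.
Proof. by rewrite mxE sum_ord3 !mxE. Qed.

Hypotheses (p_mass1 : \sum_j p 0 j = 1) (p_inv : p *m dharq_Pi a b c = p).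

Let p_sum : p 0 0 + p 0 1 + p 0 err_state = 1.
Proof. by rewrite -sum_ord3. Qed.

Lemma dharq_stationary_state1 : p 0 1 * (1 - a + b) = 1 - a.
Proof.
have col1 := mulmx_dharq_Pi_state1; rewrite p_inv in col1.
have -> : p 0 1 * (1 - a + b) =
    p 0 1 - (p 0 0 * (1 - a) + p 0 1 * (1 - b) + p 0 err_state * (1 - a))
    + (p 0 0 + p 0 1 + p 0 err_state) * (1 - a) by ring.
by rewrite -col1 p_sum subrr add0r mul1r.
Qed.

Lemma dharq_stationary_err : p 0 err_state = b + (c - b) * p 0 1.
Proof.
have colE := mulmx_dharq_Pi_err; rewrite p_inv in colE.
rewrite {1}colE.
transitivity ((p 0 0 + p 0 1 + p 0 err_state) * b + (c - b) * p 0 1).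
  by ring.
by rewrite p_sum mul1r.
Qed.

Lemma dharq_stationary_err_scaled :
  p 0 err_state * (1 - a + b) = c - a * c + b ^+ 2.
Proof.
rewrite dharq_stationary_err.
transitivity (b * (1 - a + b) + (c - b) * (p 0 1 * (1 - a + b))); first by ring.
by rewrite dharq_stationary_state1; ring.
Qed.

End DharqStationary.

Theorem mainTheorem2 (R : realFieldType) (a b c : R)
  (ha : 0 <= a <= 1) (hb : 0 <= b <= 1) (hc : 0 <= c <= 1)
  (hpos : 0 < 1 - a + b)
  (hnonneg : forall i j : 'I_3, 0 <= dharq_Pi a b c i j)
  (p : 'rV[R]_3) :
  stationary_distribution (dharq_Pi a b c) p ->
  p 0 err_state = (c - a * c + b ^+ 2) / (1 - a + b).
Proof.
move=> [_ [p_mass1 p_inv]].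
by rewrite -(dharq_stationary_err_scaled p_mass1 p_inv) mulfK // gt_eqF.
Qed.
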